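(* Let $\mathbf A\in\mathbb R^{m\times n}$ and let $\mathbf x^0\in\mathbb R^n$ be $k$-sparse. If the RIP constant of $\mathbf A$ satisfies $\delta_{2k}\le 0.4404$ and $\alpha\ge 10\|\mathbf x^0\|_\infty$ (with $\alpha>0$), then $\mathbf x^0$ is the unique minimizer of problem (P2) with $\mathbf b:=\mathbf A\mathbf x^0$.
   Context: Problem (P2) is $\min_{\mathbf x}\{\|\mathbf x\|_1+\frac{1}{2\alpha}\|\mathbf x\|_2^2:\ \mathbf A\mathbf x=\mathbf b\}$. A vector is $k$-sparse if it has at most $k$ nonzero entries. The RIP constant $\delta_k$ of $\mathbf A$ is the smallest value such that $(1-\delta_k)\|\mathbf x\|_2^2\le\|\mathbf A\mathbf x\|_2^2\le(1+\delta_k)\|\mathbf x\|_2^2$ for all $k$-sparse $\mathbf x\in\mathbb R^n$. *)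

From HB Require Import structures.
From mathcomp Require Import all_boot all_order all_algebra.
Set Implicit Arguments. Unset Strict Implicit. Unset Printing Implicit Defensive.
Import Order.TTheory GRing.Theory Num.Theory.
Local Open Scope ring_scope.

Section Defs.
Variable R : rcfType.

Definition norm1 n (x : 'cV[R]_n) : R := \sum_(i < n) `|x i ord0|.
Definition norm2sq n (x : 'cV[R]_n) : R := \sum_(i < n) (x i ord0) ^+ 2.
Definition normInf n (x : 'cV[R]_n) : R := \big[Num.max/0]_(i < n) `|x i ord0|.

Definition ksparse n (k : nat) (x : 'cV[R]_n) : Prop :=
  (#|[set i : 'I_n | x i ord0 != 0%R]| <= k)%N.

Definition RIP_holds m n (A : 'M[R]_(m, n)) (k : nat) (d : R) : Prop :=
  forall x : 'cV[R]_n, ksparse k x ->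
    (1 - d) * norm2sq x <= norm2sq (A *m x) /\ norm2sq (A *m x) <= (1 + d) * norm2sq x.

Definition is_RIP_const m n (A : 'M[R]_(m, n)) (k : nat) (d : R) : Prop :=
  RIP_holds A k d /\ (forall d', RIP_holds A k d' -> d <= d').

Definition P2_obj n (alpha : R) (x : 'cV[R]_n) : R :=
  norm1 x + (2 * alpha)^-1 * norm2sq x.

Definition P2_unique_minimizer m n (A : 'M[R]_(m, n)) (b : 'cV[R]_m) (alpha : R)
    (x : 'cV[R]_n) : Prop :=
  A *m x = b /\
  (forall y : 'cV[R]_n, A *m y = b -> P2_obj alpha x <= P2_obj alpha y) /\
  (forall y : 'cV[R]_n, A *m y = b -> P2_obj alpha y <= P2_obj alpha x -> y = x).

End Defs.

From HB Require Import structures.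
From mathcomp Require Import all_boot all_order all_algebra.
From mathcomp Require Import ring lra zify.
Import Order.TTheory GRing.Theory Num.Theory.
Local Open Scope ring_scope.

(* The core is a null space property (rip_null_space_property): every h with
   A h = 0 satisfies 11 ||h_S||_1 <= 10 ||h_(~S)||_1 for all |S| <= k.  It
   suffices to prove it for a set S0 of maximal l1 mass; write u = h_S0 and
   r = h_(~S0), so that A r = - A u.  A discriminant argument on the RIP
   (rip_cross_bound) bounds the correlation of A u with A z for z supported on
   k tail coordinates; splitting large index sets into blocks of size k
   (subset_sum_bound) and decomposing |r| into level sets (layer_cake_bound)
   yields ||A u||^2 <= sqrt (2 d (||A u||^2 - (1 - d) ||u||^2))
   (||r||_1 / sqrt k + ||u||_2 / 4), and elementary algebra (nsp_constant)
   together with ||u||_1 <= sqrt k ||u||_2 gives the inequality on S0.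

   Then, coordinatewise, 10 ||x0||_oo <= alpha yields
     P2(x0 + h) >= P2(x0) + ||h||^2 / (2 alpha) + ||h_(~S)||_1 - 11/10 ||h_S||_1
   on the support S of x0 (P2_obj_growth), so x0 is the unique minimizer. *)

Set Implicit Arguments. Unset Strict Implicit.

Section OrderedFieldFacts.
Variable R : realFieldType.

Lemma nonneg_quadratic_discr (a b c : R) : 0 <= a ->
  (forall t, 0 <= c + b * t + a * t ^+ 2) -> b ^+ 2 <= 4 * a * c.
Proof.
move=> a_ge0 q_ge0; have [a_gt0|a_le0] := ltrP 0 a.
  (* evaluate at the vertex t = - b / (2 a) *)
  have := q_ge0 (- b / (2 * a)).
  have -> : c + b * (- b / (2 * a)) + a * (- b / (2 * a)) ^+ 2
            = (4 * a * c - b ^+ 2) / (4 * a).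
    by field; rewrite ?mulf_neq0 ?(gt_eqF a_gt0) //; lra.
  by rewrite pmulr_lge0 ?subr_ge0 // invr_gt0; lra.
(* a = 0: a linear polynomial bounded below is constant *)
have a0 : a = 0 by lra.
subst a.
have [->|b_neq0] := eqVneq b 0; first by lra.
by have := q_ge0 (- (c + 1) / b); rewrite mul0r addr0 mulrCA mulfV // mulr1; lra.
Qed.

Lemma sqr_le0 (x : R) : x ^+ 2 <= 0 -> x = 0.
Proof. by move=> h; apply/eqP; rewrite -sqrf_eq0 eq_le h sqr_ge0. Qed.

Lemma sum_setC (I : finType) (F : I -> R) (T : {set I}) :
  \sum_i F i = \sum_(i in T) F i + \sum_(i in ~: T) F i.
Proof. by rewrite (bigID (mem T)) /=; congr (_ + _); apply: eq_bigl => i; rewrite inE. Qed.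

Lemma head_set_dominates (T : finType) (x : T -> R)
    (S0 : {set T}) (k : nat) : (#|S0| <= k)%N ->
  (forall S : {set T}, (#|S| <= k)%N -> \sum_(i in S) `|x i| <= \sum_(i in S0) `|x i|) ->
  forall i, i \notin S0 -> k%:R * x i ^+ 2 <= \sum_(j in S0) x j ^+ 2.
Proof.
move=> S0_k S0_max i i_S0; have [S0_lt|S0_ge] := ltnP #|S0| k.
  (* S0 is not full, so adding i cannot increase the mass: x_i = 0 *)
  have := S0_max (i |: S0); rewrite cardsU1 i_S0 add1n => /(_ S0_lt).
  rewrite big_setU1 //= => mass; have : `|x i| <= 0 by lra.
  rewrite normr_le0 => /eqP ->.
  by rewrite expr0n mulr0 sumr_ge0 // => j _; apply: sqr_ge0.
have card_S0 : #|S0| = k by apply/eqP; rewrite eqn_leq S0_k S0_ge.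
(* swapping any j of S0 for i cannot increase the mass: |x_i| <= |x_j| *)
have swap j : j \in S0 -> x i ^+ 2 <= x j ^+ 2.
  move=> j_S0; have := S0_max (i |: (S0 :\ j)).
  rewrite cardsU1 !inE (negbTE i_S0) andbF /= (cardsD1 j S0) j_S0 in S0_k *.
  move=> /(_ S0_k); rewrite big_setU1 /=; last by rewrite !inE (negbTE i_S0) andbF.
  rewrite [X in _ <= X](bigD1 j) //= => mass.
  have : `|x i| <= `|x j|.
    have E : \sum_(l in S0 :\ j) `|x l| = \sum_(l in S0 | l != j) `|x l|.
      by apply: eq_bigl => l; rewrite !inE andbC.
    by move: mass; rewrite E lerD2r.
  by rewrite -[x i ^+ 2]real_normK ?num_real // -[x j ^+ 2]real_normK ?num_real //
    ler_pXn2r ?nnegrE.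
by apply: le_trans (ler_sum _ swap); rewrite sumr_const card_S0 mulr_natl.
Qed.

End OrderedFieldFacts.

Lemma subset_of_card (T : finType) (E : {set T}) k : (k <= #|E|)%N ->
  exists2 F : {set T}, F \subset E & #|F| = k.
Proof.
move=> kE; exists [set x in take k (enum E)].
  by apply/subsetP=> x; rewrite inE => /mem_take; rewrite mem_enum.
rewrite cardsE; move/card_uniqP: (take_uniq k (enum_uniq (mem E))) => ->.
by rewrite size_take -cardE; case: ltngtP kE => // ->.
Qed.

Section LayerCake.
Variables (R : realFieldType) (T : finType) (D : {set T}) (f : T -> R) (B s : R).
Hypotheses (s_gt0 : 0 < s) (B_ge0 : 0 <= B).
Hypothesis subset_bound :
  forall E : {set T}, E \subset D -> \sum_(i in E) f i <= B * (#|E|%:R / s + s / 4).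

Lemma layer_cake_zero (r : T -> R) (th : R) : 0 <= th -> [set i | r i != 0] = set0 ->
  \sum_i f i * r i <= B * ((\sum_i r i) / s + s * th / 4).
Proof.
move=> th_ge0 /setP supp0; have r0 i : r i = 0.
  by apply/eqP; move: (supp0 i); rewrite !inE => /negbT; rewrite negbK.
rewrite !big1 => [|i _|i _]; rewrite ?r0 ?mulr0 // mul0r add0r.
by rewrite mulr_ge0 // divr_ge0 // mulr_ge0 // ltW.
Qed.

(* Layer-cake summation: a weight vector r with values in [0, th] supported on
   D is a nonnegative combination of indicators of level sets, each of which
   obeys subset_bound; the cost per unit of mass is B / s, plus B s / 4 per
   unit of height. *)
Lemma layer_cake_bound (r : T -> R) (th : R) :
  0 <= th -> (forall i, 0 <= r i <= th) -> (forall i, i \notin D -> r i = 0) ->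
  \sum_i f i * r i <= B * ((\sum_i r i) / s + s * th / 4).
Proof.
move: {2}#|[set i | r i != 0]| (leqnn #|[set i | r i != 0]|) => m.
elim: m r th => [|m IH] r th supp_m th_ge0 r_bnd r_D;
  set Sp := [set i | r i != 0] in supp_m *;
  have [/(layer_cake_zero th_ge0)//|[j0 j0_Sp]] := set_0Vmem Sp.
  by move: supp_m; rewrite leqn0 => /eqP /cards0_eq Sp0; move: j0_Sp; rewrite Sp0 inE.
(* peel off the lowest nonzero level t of r, spread over the whole support *)
case: (arg_minP r j0_Sp) => j j_Sp j_min; have {}j_Sp : j \in Sp := j_Sp.
set t := r j.
have t_gt0 : 0 < t by move: j_Sp; rewrite /Sp inE lt_def => ->; case/andP: (r_bnd j).
have t_le : t <= th by case/andP: (r_bnd j).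
have Sp_D : Sp \subset D.
  by apply/subsetP => i; rewrite /Sp inE; apply: contraR => /r_D ->; rewrite eqxx.
pose r' i := r i - t * (i \in Sp)%:R.
have r'_bnd i : 0 <= r' i <= th - t.
  rewrite /r'; case: (boolP (i \in Sp)) => i_Sp; rewrite ?mulr1 ?mulr0 ?subr0.
    by have := j_min i i_Sp; case/andP: (r_bnd i); rewrite /t => *; apply/andP; lra.
  by move: i_Sp; rewrite /Sp inE negbK => /eqP ->; apply/andP; lra.
have r'_D i : i \notin D -> r' i = 0.
  move=> i_D; rewrite /r' r_D //; case: (boolP (i \in Sp)) => i_Sp; last by rewrite mulr0 subr0.
  by move/subsetP: Sp_D => /(_ i i_Sp); rewrite (negbTE i_D).
have supp'_m : (#|[set i | r' i != 0%R]| <= m)%N.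
  have sub : [set i | r' i != 0] \subset Sp :\ j.
    apply/subsetP => i; rewrite inE /r' in_setD1.
    case: (boolP (i \in Sp)) => i_Sp; rewrite ?mulr1 ?mulr0 ?subr0 => ri.
      by rewrite andbT; apply: contraNneq ri => ->; rewrite subrr.
    by move: i_Sp; rewrite /Sp inE ri.
  by have := subset_leq_card sub; move: supp_m; rewrite (cardsD1 j Sp) j_Sp; lia.
have sum_fr : \sum_i f i * r i = \sum_i f i * r' i + t * \sum_(i in Sp) f i.
  rewrite [X in _ = _ + t * X]big_mkcond /= mulr_sumr -big_split /=.
  by apply: eq_bigr => i _; rewrite /r'; case: (i \in Sp); rewrite ?mulr1 ?mulr0; ring.
have sum_r : \sum_i r i = \sum_i r' i + t * #|Sp|%:R.
  rewrite -sum1_card natr_sum mulr_sumr [X in _ = _ + X]big_mkcond /= -big_split /=.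
  by apply: eq_bigr => i _; rewrite /r'; case: (i \in Sp); rewrite ?mulr1 ?mulr0; ring.
have -> : B * ((\sum_i r i) / s + s * th / 4) =
    B * ((\sum_i r' i) / s + s * (th - t) / 4) + t * (B * (#|Sp|%:R / s + s / 4)).
  by rewrite sum_r; field; rewrite gt_eqF.
rewrite sum_fr lerD ?IH ?subr_ge0 //.
by rewrite ler_wpM2l ?subset_bound // ltW.
Qed.

End LayerCake.

Section RealClosedFacts.
Variable R : rcfType.

Lemma sqrt_le_amgm (e s : R) : 0 <= e -> 0 < s -> Num.sqrt e <= e / s + s / 4.
Proof.
move=> e_ge0 s_gt0; have sq_e : Num.sqrt e ^+ 2 = e by rewrite sqr_sqrtr.
have -> : e / s + s / 4 = Num.sqrt e + (2 * Num.sqrt e - s) ^+ 2 / (4 * s).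
  by rewrite -{1}sq_e; field; rewrite gt_eqF.
by rewrite lerDl divr_ge0 ?sqr_ge0 // mulr_ge0 // ltW.
Qed.

(* A set function bounded by B sqrt |E| on sets of size at most k = s^2 is
   bounded by B (|E| / s + s / 4) on all sets: small sets by AM-GM, large sets
   by splitting off k elements at a time. *)
Lemma subset_sum_bound (T : finType) (D : {set T}) (f : T -> R) (k : nat) (B s : R) :
  0 < s -> s ^+ 2 = k%:R -> 0 <= B ->
  (forall E : {set T}, E \subset D -> (#|E| <= k)%N ->
     \sum_(i in E) f i <= B * Num.sqrt #|E|%:R) ->
  forall E : {set T}, E \subset D -> \sum_(i in E) f i <= B * (#|E|%:R / s + s / 4).
Proof.
move=> s_gt0 s2k B_ge0 small_bound E.
have k_gt0 : (0 < k)%N by rewrite -(ltr0n R) -s2k exprn_gt0.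
move: {2}#|E| (leqnn #|E|) => m; elim: m E => [|m IH] E E_m E_D.
  apply: le_trans (small_bound _ E_D _) _; first by move: E_m; rewrite leqn0 => /eqP ->.
  by rewrite ler_wpM2l // sqrt_le_amgm.
have [E_k|k_E] := leqP #|E| k.
  by apply: le_trans (small_bound _ E_D E_k) _; rewrite ler_wpM2l // sqrt_le_amgm.
have [F F_E F_k] := subset_of_card (ltnW k_E).
have card_EF : #|E :\: F| = (#|E| - k)%N by rewrite cardsD (setIidPr F_E) F_k.
have sqrt_k : Num.sqrt k%:R = k%:R / s.
  by rewrite -s2k sqrtr_sqr ger0_norm ?expr2 ?mulfK ?gt_eqF // ltW.
have bound_F := small_bound F (subset_trans F_E E_D) (eq_leq F_k).
have EF_m : (#|E :\: F| <= m)%N by rewrite card_EF; lia.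
have bound_EF := IH (E :\: F) EF_m (subset_trans (subsetDl _ _) E_D).
rewrite F_k sqrt_k in bound_F; rewrite card_EF natrB ?(ltnW k_E) // in bound_EF.
rewrite (big_setID F) /= (setIidPr F_E).
have -> : B * (#|E|%:R / s + s / 4) =
    B * (k%:R / s) + B * ((#|E|%:R - k%:R) / s + s / 4) by field; rewrite gt_eqF.
exact: lerD.
Qed.

Lemma l1_le_sqrt_card_l2 (T : finType) (x : T -> R) (S : {set T}) (k : nat) (s : R) :
  (#|S| <= k)%N -> 0 < s -> s ^+ 2 = k%:R ->
  \sum_(i in S) `|x i| <= s * Num.sqrt (\sum_(i in S) x i ^+ 2).
Proof.
move=> S_k s_gt0 s2k; set U := \sum_(i in S) x i ^+ 2; set N := Num.sqrt U.
have U_ge0 : 0 <= U by apply: sumr_ge0 => i _; apply: sqr_ge0.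
have N2 : N ^+ 2 = U by rewrite sqr_sqrtr.
have [N0|N_neq0] := eqVneq N 0.
  have /eqP : U = 0 by rewrite -N2 N0 expr0n.
  rewrite psumr_eq0 => [/allP x0|i _]; last exact: sqr_ge0.
  rewrite N0 mulr0 big1 // => i i_S; have := x0 i (mem_index_enum _).
  by rewrite i_S /= sqrf_eq0 => /eqP ->; rewrite normr0.
have N_gt0 : 0 < N by rewrite lt_def N_neq0 sqrtr_ge0.
(* compare each |x_i| with the threshold th = N / s via 2 th |x_i| <= x_i^2 + th^2 *)
set th := N / s; have th_gt0 : 0 < th by rewrite divr_gt0.
have amgm : 2 * th * \sum_(i in S) `|x i| <= U + #|S|%:R * th ^+ 2.
  rewrite mulr_sumr /U (mulr_natl (th ^+ 2)) -sumr_const -big_split /=.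
  apply: ler_sum => i _; have := sqr_ge0 (`|x i| - th).
  by rewrite -[x i ^+ 2]real_normK ?num_real //; nra.
have card_th : #|S|%:R * th ^+ 2 <= U.
  have -> : U = k%:R * th ^+ 2 by rewrite /th -s2k -N2; field; rewrite gt_eqF.
  by rewrite ler_wpM2r ?sqr_ge0 // ler_nat.
rewrite -(ler_pM2l th_gt0).
have -> : th * (s * N) = U by rewrite /th -N2; field; rewrite gt_eqF.
lra.
Qed.

(* If X <= sqrt (2 d (X - (1 - d) N^2)) W with X, W > 0, then squaring gives a
   quadratic inequality in X, whose discriminant must be nonnegative. *)
Lemma rip_discriminant (X N W d : R) : 0 < X -> 0 < W -> (1 - d) * N ^+ 2 <= X ->
  X <= Num.sqrt (2 * d * (X - (1 - d) * N ^+ 2)) * W ->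
  2 * (1 - d) * N ^+ 2 <= d * W ^+ 2.
Proof.
move=> X_gt0 W_gt0 X_ge XW.
have rho_gt0 : 0 < 2 * d * (X - (1 - d) * N ^+ 2).
  rewrite ltNge; apply/negP => /ler0_sqrtr rho0; move: XW; rewrite rho0 mul0r; lra.
have d_gt0 : 0 < d by move: rho_gt0; nra.
have X2 : X ^+ 2 <= 2 * d * (X - (1 - d) * N ^+ 2) * W ^+ 2.
  rewrite -[r in r * _]sqr_sqrtr ?(ltW rho_gt0) // -exprMn.
  by rewrite ler_pXn2r ?nnegrE ?(ltW X_gt0) ?mulr_ge0 ?sqrtr_ge0 ?(ltW W_gt0).
have dW_gt0 : 0 < d * W ^+ 2 by rewrite mulr_gt0 ?exprn_gt0.
rewrite -(ler_pM2l dW_gt0); have := sqr_ge0 (X - d * W ^+ 2); nra.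
Qed.

(* With X = ||A u||^2,
   N = ||u||_2, a = ||r||_1 and sk = sqrt k, the energy estimate and
   d <= 0.4404 give d (a + sk N / 4)^2 >= 2 (1 - d) (sk N)^2, whence
   a >= 1.34 sk N > 1.1 sk N. *)
Lemma nsp_constant (X N a d sk : R) : 0 <= N -> 0 < sk -> 0 <= a ->
  (1 - d) * N ^+ 2 <= X -> d <= 4404%:R / 10000%:R ->
  X <= Num.sqrt (2 * d * (X - (1 - d) * N ^+ 2)) * (a / sk + N / 4) ->
  11%:R * (sk * N) <= 10%:R * a.
Proof.
move=> N_ge0 sk_gt0 a_ge0 X_ge dle XW; have d_lt1 : d < 1 by lra.
have [->|N_neq0] := eqVneq N 0; first by rewrite !mulr0; lra.
have N_gt0 : 0 < N by rewrite lt_def N_neq0.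
have X_gt0 : 0 < X.
  by apply: lt_le_trans X_ge; rewrite mulr_gt0 ?exprn_gt0 // subr_gt0.
have a_sk : 0 <= a / sk by rewrite divr_ge0 // ltW.
have := rip_discriminant X_gt0 _ X_ge XW; rewrite ltr_wpDl ?divr_gt0 // => /(_ isT) discr.
have discrQ : 2 * (1 - d) * (sk * N) ^+ 2 <= d * (a + sk * N / 4) ^+ 2.
  have -> : a + sk * N / 4 = sk * (a / sk + N / 4) by field; rewrite gt_eqF.
  have -> : 2 * (1 - d) * (sk * N) ^+ 2 = sk ^+ 2 * (2 * (1 - d) * N ^+ 2) by ring.
  have -> : d * (sk * (a / sk + N / 4)) ^+ 2 = sk ^+ 2 * (d * (a / sk + N / 4) ^+ 2).
    by ring.
  by rewrite ler_wpM2l ?sqr_ge0.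
have Q_gt0 : 0 < sk * N by rewrite mulr_gt0.
move: (sk * N) Q_gt0 discrQ => Q Q_gt0 discrQ.
rewrite leNgt; apply/negP => small_a.
have small_W : (a + Q / 4) ^+ 2 <= (135%:R / 100%:R) ^+ 2 * Q ^+ 2.
  by rewrite -exprMn ler_pXn2r ?nnegrE //; lra.
have Q2_gt0 := exprn_gt0 2 Q_gt0.
have [d_le0|d_gt0] := lerP d 0.
  by have := mulr_le0_ge0 d_le0 (sqr_ge0 (a + Q / 4)); nra.
have := ler_wpM2l (ltW d_gt0) small_W; move: (Q ^+ 2) Q2_gt0 discrQ => q; nra.
Qed.

End RealClosedFacts.

Section Vectors.
Variable R : rcfType.

Definition dotv p (v w : 'cV[R]_p) : R := \sum_i v i ord0 * w i ord0.

Definition supported_on n (T : {set 'I_n}) (x : 'cV[R]_n) : Prop :=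
  forall i, i \notin T -> x i ord0 = 0.

Definition restrict n (T : {set 'I_n}) (x : 'cV[R]_n) : 'cV[R]_n :=
  \col_i (if i \in T then x i ord0 else 0).

Lemma restrictE n (T : {set 'I_n}) x i :
  restrict T x i ord0 = if i \in T then x i ord0 else 0.
Proof. by rewrite mxE. Qed.

Lemma restrict_supported n (T : {set 'I_n}) x : supported_on T (restrict T x).
Proof. by move=> i i_T; rewrite restrictE (negbTE i_T). Qed.

Lemma restrict_sum n (T : {set 'I_n}) (x : 'cV[R]_n) :
  restrict T x + restrict (~: T) x = x.
Proof.
by apply/matrixP => i j; rewrite (ord1 j) !mxE inE; case: (i \in T); rewrite ?addr0 ?add0r.
Qed.

Lemma norm2sq_restrict n (T : {set 'I_n}) (x : 'cV[R]_n) :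
  norm2sq (restrict T x) = \sum_(i in T) x i ord0 ^+ 2.
Proof.
rewrite /norm2sq [RHS]big_mkcond; apply: eq_bigr => i _.
by rewrite restrictE; case: ifP; rewrite ?expr0n.
Qed.

Lemma supported_ksparse n k (T : {set 'I_n}) (x : 'cV[R]_n) :
  (#|T| <= k)%N -> supported_on T x -> ksparse k x.
Proof.
move=> T_k x_T; apply: leq_trans T_k; apply: subset_leq_card.
by apply/subsetP => i; rewrite inE; apply: contraR => /x_T ->; rewrite eqxx.
Qed.

Lemma norm2sq_ge0 p (v : 'cV[R]_p) : 0 <= norm2sq v.
Proof. by apply: sumr_ge0 => i _; apply: sqr_ge0. Qed.

Lemma norm2sq_dotv p (v : 'cV[R]_p) : norm2sq v = dotv v v.
Proof. by apply: eq_bigr => i _; rewrite expr2. Qed.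

Lemma norm2sq_addZ p (v w : 'cV[R]_p) t :
  norm2sq (v + t *: w) = norm2sq v + 2 * t * dotv v w + t ^+ 2 * norm2sq w.
Proof.
rewrite /norm2sq /dotv !mulr_sumr -!big_split /=.
by apply: eq_bigr => i _; rewrite !mxE; ring.
Qed.

Lemma dotvN p (v w : 'cV[R]_p) : dotv v (- w) = - dotv v w.
Proof. by rewrite /dotv -sumrN; apply: eq_bigr => i _; rewrite mxE mulrN. Qed.

Lemma dotv_mul m n (A : 'M[R]_(m, n)) u z :
  dotv (A *m u) (A *m z) = dotv (A^T *m (A *m u)) z.
Proof.
have dotv_mx p (v w : 'cV[R]_p) : dotv v w = (v^T *m w) ord0 ord0.
  by rewrite /dotv mxE; apply: eq_bigr => j _; rewrite mxE.
by rewrite !dotv_mx !trmx_mul trmxK !mulmxA.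
Qed.

Lemma dotv_disjoint n (S E : {set 'I_n}) (u z : 'cV[R]_n) :
  [disjoint S & E] -> supported_on S u -> supported_on E z -> dotv u z = 0.
Proof.
move=> SE u_S z_E; rewrite /dotv big1 // => i _.
case: (boolP (i \in S)) => i_S; last by rewrite u_S ?mul0r.
by rewrite z_E ?mulr0 // (disjointFr SE i_S).
Qed.

Lemma norm2sq_eq0 p (v : 'cV[R]_p) : norm2sq v = 0 -> v = 0.
Proof.
move/eqP; rewrite psumr_eq0 => [/allP v0|i _]; last exact: sqr_ge0.
apply/matrixP => i j; rewrite (ord1 j) mxE.
by apply/eqP; rewrite -sqrf_eq0; apply: v0; rewrite mem_index_enum.
Qed.

End Vectors.

(* It is the discriminant condition for the nonnegative quadratic
   t |-> ||A (u + t z)||^2 - (1 - d) ||u + t z||^2. *)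
Lemma rip_cross_bound (R : rcfType) m n k (A : 'M[R]_(m, n)) d (u z : 'cV[R]_n)
    (S E : {set 'I_n}) :
  RIP_holds A (2 * k)%N d -> (#|S| <= k)%N -> (#|E| <= k)%N -> [disjoint S & E] ->
  supported_on S u -> supported_on E z ->
  dotv (A *m u) (A *m z) ^+ 2 <=
    2 * d * norm2sq z * (norm2sq (A *m u) - (1 - d) * norm2sq u).
Proof.
move=> RIP S_k E_k SE u_S z_E; have k_2k : (k <= 2 * k)%N by lia.
have [Z_lo Z_hi] := RIP z (supported_ksparse (leq_trans E_k k_2k) z_E).
have [U_lo _] := RIP u (supported_ksparse (leq_trans S_k k_2k) u_S).
have uz := dotv_disjoint SE u_S z_E.
set X := norm2sq (A *m u) in U_lo *; set U := norm2sq u in U_lo *.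
set Z := norm2sq z in Z_lo Z_hi *; set ZA := norm2sq (A *m z) in Z_lo Z_hi.
set p := dotv (A *m u) (A *m z).
have quad t : 0 <= (X - (1 - d) * U) + (2 * p) * t + (ZA - (1 - d) * Z) * t ^+ 2.
  have ut_supp : supported_on (S :|: E) (u + t *: z).
    move=> i; rewrite inE negb_or => /andP[i_S i_E].
    by rewrite !mxE u_S // z_E // mulr0 addr0.
  have ut_sparse : (#|S :|: E| <= 2 * k)%N.
    by apply: leq_trans (leq_card_setU _ _) _; lia.
  have [lo _] := RIP _ (supported_ksparse ut_sparse ut_supp).
  move: lo; rewrite mulmxDr -scalemxAr !norm2sq_addZ uz -/X -/U -/Z -/ZA -/p; nra.
have lead_ge0 : 0 <= ZA - (1 - d) * Z by lra.
have const_ge0 : 0 <= X - (1 - d) * U by lra.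
have discr := nonneg_quadratic_discr lead_ge0 quad.
have lead_le : ZA - (1 - d) * Z <= 2 * d * Z by lra.
by have := ler_wpM2r const_ge0 lead_le; nra.
Qed.

Section HeadTail.
Variables (R : rcfType) (m n k : nat) (A : 'M[R]_(m, n)) (d : R) (h : 'cV[R]_n).
Variable S0 : {set 'I_n}.
Hypotheses (RIP : RIP_holds A (2 * k)%N d) (Ah : A *m h = 0) (S0_k : (#|S0| <= k)%N).
Hypothesis S0_max : forall S : {set 'I_n}, (#|S| <= k)%N ->
  \sum_(i in S) `|h i ord0| <= \sum_(i in S0) `|h i ord0|.

Local Notation u := (restrict S0 h).
Local Notation r := (restrict (~: S0) h).

Let gap : R := norm2sq (A *m u) - (1 - d) * norm2sq u.
Let B : R := Num.sqrt (2 * d * gap).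

Let corr i : R := - (A^T *m (A *m u)) i ord0 * Num.sg (h i ord0).

Lemma gap_ge0 : 0 <= gap.
Proof.
have u_sparse : ksparse (2 * k)%N u.
  by apply: supported_ksparse (restrict_supported h); lia.
have [lo _] := RIP u_sparse.
by rewrite /gap subr_ge0.
Qed.

(* On a block E of at most k tail coordinates, the correlation is at most
   B sqrt |E|: apply the RIP cross bound to u and z = -sg(h) on E. *)
Lemma tail_block_bound (E : {set 'I_n}) : E \subset ~: S0 -> (#|E| <= k)%N ->
  \sum_(i in E) corr i <= B * Num.sqrt #|E|%:R.
Proof.
move=> E_tail E_k; pose z := restrict E (\col_i - Num.sg (h i ord0)).
have corr_E : dotv (A *m u) (A *m z) = \sum_(i in E) corr i.
  rewrite dotv_mul /dotv [RHS]big_mkcond; apply: eq_bigr => i _.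
  by rewrite restrictE; case: ifP => _; rewrite ?mulr0 // [X in _ * X]mxE mulrN /corr mulNr.
have z2 : norm2sq z <= #|E|%:R.
  rewrite norm2sq_restrict -sumr_const; apply: ler_sum => i _.
  by rewrite mxE sqrrN sqr_sg; case: (_ != 0); rewrite ?ler01.
have S0E : [disjoint S0 & E] by rewrite disjoint_sym disjoints_subset.
have := rip_cross_bound (z := z) RIP S0_k E_k S0E (restrict_supported h) (restrict_supported _).
rewrite -/gap corr_E mulrAC; set c := \sum_(i in E) corr i => c2.
have [rho_le0|rho_gt0] := lerP (2 * d * gap) 0.
  have -> : c = 0.
    exact/sqr_le0/(le_trans c2)/mulr_le0_ge0/norm2sq_ge0.
  by rewrite mulr_ge0 ?sqrtr_ge0.
apply: le_trans (ler_norm c) _; rewrite -sqrtr_sqr /B -sqrtrM ?(ltW rho_gt0) //.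
by apply: ler_wsqrtr; apply: le_trans c2 (ler_wpM2l (ltW rho_gt0) z2).
Qed.

Lemma tail_entry_bound i : (0 < k)%N -> i \notin S0 ->
  `|h i ord0| <= Num.sqrt (norm2sq u) / Num.sqrt k%:R.
Proof.
move=> k_gt0 i_S0; have sk_gt0 : 0 < Num.sqrt (k%:R : R) by rewrite sqrtr_gt0 ltr0n.
rewrite ler_pdivlMr // -sqrtr_sqr -sqrtrM ?sqr_ge0 //; apply: ler_wsqrtr.
by rewrite mulrC norm2sq_restrict (head_set_dominates (x := fun j => h j ord0)).
Qed.

(* Since A r = - A u, the energy ||A u||^2 is the correlation weighted by |r|. *)
Lemma energy_identity : \sum_i corr i * `|r i ord0| = norm2sq (A *m u).
Proof.
have Ar : A *m r = - (A *m u).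
  by apply/eqP; rewrite -addr_eq0 -mulmxDr addrC restrict_sum Ah.
rewrite norm2sq_dotv -{2}[A *m u]opprK -Ar dotvN dotv_mul /dotv -sumrN.
apply: eq_bigr => i _; rewrite /corr restrictE inE.
case: (boolP (i \in S0)) => //= [_|_]; first by rewrite normr0 mulr0 mulr0 oppr0.
by rewrite -mulrA mulr_sg_norm mulNr.
Qed.

Lemma head_nsp : (0 < k)%N -> d <= 4404%:R / 10000%:R ->
  11%:R * \sum_(i in S0) `|h i ord0| <= 10%:R * \sum_(i in ~: S0) `|h i ord0|.
Proof.
move=> k_gt0 dle; set s := Num.sqrt (k%:R : R); set N := Num.sqrt (norm2sq u).
have s_gt0 : 0 < s by rewrite sqrtr_gt0 ltr0n.
have s2k : s ^+ 2 = k%:R by rewrite sqr_sqrtr ?ler0n.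
have N2 : N ^+ 2 = norm2sq u by rewrite sqr_sqrtr ?norm2sq_ge0.
have B_ge0 : 0 <= B := sqrtr_ge0 _.
have block_bound := subset_sum_bound s_gt0 s2k B_ge0 tail_block_bound.
have layers := layer_cake_bound s_gt0 B_ge0 block_bound (r := fun i => `|r i ord0|)
  (th := N / s).
have r_mass : \sum_i `|r i ord0| = \sum_(i in ~: S0) `|h i ord0|.
  rewrite [RHS]big_mkcond; apply: eq_bigr => i _.
  by rewrite restrictE; case: ifP; rewrite ?normr0.
rewrite energy_identity r_mass in layers.
have head_l1 : \sum_(i in S0) `|h i ord0| <= s * N.
  by rewrite /N norm2sq_restrict (l1_le_sqrt_card_l2 (fun j => h j ord0) S0_k).
apply: le_trans (ler_wpM2l (ler0n R 11) head_l1) _.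
apply: (nsp_constant (X := norm2sq (A *m u)) (d := d)).
- exact: sqrtr_ge0.
- exact: s_gt0.
- by apply: sumr_ge0 => i _.
- by rewrite N2 -subr_ge0 gap_ge0.
- exact: dle.
- rewrite N2 -/gap; apply: le_trans (layers _ _ _) _.
  + by rewrite divr_ge0 ?sqrtr_ge0 ?(ltW s_gt0).
  + move=> i; rewrite normr_ge0 restrictE inE; case: ifP => [i_S0|_].
      exact: tail_entry_bound.
    by rewrite normr0 divr_ge0 ?sqrtr_ge0 ?(ltW s_gt0).
  + by move=> i i_S0; rewrite restrictE (negbTE i_S0) normr0.
  + by rewrite mulrCA divff ?gt_eqF // mulr1.
Qed.

End HeadTail.

(* Null space property of order k with constant 10/11 from delta_2k <= 0.4404:
   it suffices to check it on a set S0 of maximal l1 mass (head_nsp). *)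
Lemma rip_null_space_property (R : rcfType) m n k (A : 'M[R]_(m, n)) d (h : 'cV[R]_n) :
  RIP_holds A (2 * k)%N d -> d <= 4404%:R / 10000%:R -> A *m h = 0 ->
  forall S : {set 'I_n}, (#|S| <= k)%N ->
  11%:R * \sum_(i in S) `|h i ord0| <= 10%:R * \sum_(i in ~: S) `|h i ord0|.
Proof.
move=> RIP dle Ah S S_k.
have [k0|k_gt0] := posnP k.
  move: S_k; rewrite k0 leqn0 cards_eq0 => /eqP ->.
  by rewrite big_set0 mulr0 mulr_ge0 ?ler0n // sumr_ge0.
have set0_k : (#|(set0 : {set 'I_n})| <= k)%N by rewrite cards0.
case: (@arg_maxP _ _ _ set0 (fun T : {set 'I_n} => #|T| <= k)%N
  (fun T => \sum_(i in T) `|h i ord0|) set0_k).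
move=> S0 S0_k S0_max; have := head_nsp RIP Ah S0_k S0_max k_gt0 dle.
have := S0_max S S_k; have /= := sum_setC (fun i => `|h i ord0|) S.
by have /= := sum_setC (fun i => `|h i ord0|) S0; lra.
Qed.

Lemma coord_growth (R : realFieldType) (alpha x h : R) : 0 < alpha -> 10%:R * `|x| <= alpha ->
  `|x| + (2 * alpha)^-1 * x ^+ 2 + (2 * alpha)^-1 * h ^+ 2 - 11%:R / 10%:R * `|h|
  <= `|x + h| + (2 * alpha)^-1 * (x + h) ^+ 2.
Proof.
move=> alpha_gt0 x_small; set c := (2 * alpha)^-1.
have triangle : `|x| <= `|x + h| + `|h|.
  by have := ler_normD (x + h) (- h); rewrite normrN addrK.
have cross : 2 * c * `|x| * `|h| <= `|h| / 10%:R.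
  have -> : 2 * c * `|x| = `|x| / alpha by rewrite /c; field; rewrite gt_eqF.
  by rewrite [X in _ <= X]mulrC ler_wpM2r // ler_pdivrMr //; lra.
have cross_lo : - (2 * c * x * h) <= 2 * c * `|x| * `|h|.
  apply: le_trans (ler_norm _) _; rewrite normrN !normrM normr_nat.
  by rewrite ger0_norm // invr_ge0 mulr_ge0 // ltW.
have -> : c * (x + h) ^+ 2 = c * x ^+ 2 + c * h ^+ 2 + 2 * c * x * h by ring.
lra.
Qed.

Lemma P2_obj_growth (R : rcfType) n (alpha : R) (S : {set 'I_n}) (x y : 'cV[R]_n) :
  0 < alpha -> 10%:R * normInf x <= alpha -> supported_on S x ->
  11%:R * \sum_(i in S) `|(y - x) i ord0| <= 10%:R * \sum_(i in ~: S) `|(y - x) i ord0| ->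
  P2_obj alpha x + (2 * alpha)^-1 * norm2sq (y - x) <= P2_obj alpha y.
Proof.
move=> alpha_gt0 x_small x_S nsp; set c := (2 * alpha)^-1; set h := y - x in nsp *.
pose psi i := if i \in S then - (11%:R / 10%:R) * `|h i ord0| else `|h i ord0|.
have psi_ge0 : 0 <= \sum_i psi i.
  have psi_S : \sum_(i in S) psi i = - (11%:R / 10%:R) * \sum_(i in S) `|h i ord0|.
    by rewrite mulr_sumr; apply: eq_bigr => i i_S; rewrite /psi i_S.
  have psi_nS : \sum_(i in ~: S) psi i = \sum_(i in ~: S) `|h i ord0|.
    by apply: eq_bigr => i; rewrite inE /psi => /negbTE ->.
  by rewrite (sum_setC _ S) psi_S psi_nS; lra.
rewrite /P2_obj /norm1 /norm2sq -/c -subr_ge0 !mulr_sumr -!big_split -sumrB /=.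
apply: le_trans psi_ge0 _; apply: ler_sum => i _.
have -> : y i ord0 = x i ord0 + h i ord0 by rewrite /h !mxE; ring.
rewrite /psi; case: ifP => i_S.
  have x_i : 10%:R * `|x i ord0| <= alpha.
    by apply: le_trans x_small; rewrite ler_wpM2l // /normInf (bigD1 i) //= le_max lexx.
  by have := coord_growth (h i ord0) alpha_gt0 x_i; rewrite -/c; lra.
rewrite x_S ?i_S // add0r normr0 expr0n /= mulr0 addr0; lra.
Qed.

Unset Implicit Arguments.

Theorem mainTheorem2 (R : rcfType) (m n k : nat) (A : 'M[R]_(m, n))
    (x0 : 'cV[R]_n) (alpha : R) :
  ksparse k x0 ->
  (exists delta : R, is_RIP_const A (2 * k)%N delta /\ delta <= 4404%:R / 10000%:R) ->
  0 < alpha ->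
  10%:R * normInf x0 <= alpha ->
  P2_unique_minimizer A (A *m x0) alpha x0.
Proof.
(* only the RIP inequalities at level delta are needed, not its minimality *)
move=> x0_sparse [d [[RIP _] dle]] alpha_gt0 x0_small.
set S := [set i | x0 i ord0 != 0].
have x0_S : supported_on S x0 by move=> i; rewrite inE negbK => /eqP.
have growth y : A *m y = A *m x0 ->
    P2_obj alpha x0 + (2 * alpha)^-1 * norm2sq (y - x0) <= P2_obj alpha y.
  move=> Ay; apply: P2_obj_growth alpha_gt0 x0_small x0_S _.
  by apply: (rip_null_space_property RIP dle) x0_sparse; rewrite mulmxBr Ay subrr.
have c_gt0 : 0 < (2 * alpha)^-1 by rewrite invr_gt0 mulr_gt0.
split => //; split => [y Ay | y Ay y_le].
  by have := growth y Ay; have := norm2sq_ge0 (y - x0); nra.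
have : norm2sq (y - x0) = 0.
  by have := growth y Ay; have := norm2sq_ge0 (y - x0); nra.
by move/norm2sq_eq0/eqP; rewrite subr_eq0 => /eqP.
Qed.
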